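(* Let $n_u<n$, $n_b=n-n_u$, $\mathbf{A}\in\mathbb{R}^{n_u\times n_b}$ and $\mathbf{S}=\begin{bmatrix}\mathbf{A}\\ \mathbf{I}_{n_b}\end{bmatrix}\in\mathbb{R}^{n\times n_b}$. For $j=1,\dots,p$ ($p\ge2$) let $\mathbf{L}_j\in\{0,1\}^{n_j\times n}$ be selection matrices (rows are distinct rows of $\mathbf{I}_n$) such that every variable is selected by at least one $\mathbf{L}_j$; let $m=\sum_j n_j$ and $\mathbf{K}=[\mathbf{L}_1^\top\cdots\mathbf{L}_p^\top]^\top\in\{0,1\}^{m\times n}$. Suppose the base forecasts satisfy $\widehat{\mathbf{y}}=\mathbf{K}\mathbf{S}\mathbf{b}+\boldsymbol{\varepsilon}$, with $\mathbf{y}=\mathbf{S}\mathbf{b}$ the target vector, $\boldsymbol{\varepsilon}$ zero-mean with positive definite covariance $\mathbf{W}\in\mathbb{R}^{m\times m}$ (so the base forecasts are unbiased, $E(\widehat{\mathbf{y}})=\mathbf{K}E(\mathbf{y})$). Let $\mathbf{W}_c=(\mathbf{K}^\top\mathbf{W}^{-1}\mathbf{K})^{-1}$. Consider coherent linear combined forecasts of the form $\mathbf{S}\mathbf{G}\widehat{\mathbf{y}}$, $\mathbf{G}\in\mathbb{R}^{n_b\times m}$, subject to the unbiasedness constraint $\mathbf{G}\mathbf{K}\mathbf{S}=\mathbf{I}_{n_b}$, with error covariance $\mathbf{S}\mathbf{G}\mathbf{W}\mathbf{G}^\top\mathbf{S}^\top$. Then the MMSE coherent linear forecast combination, i.e.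 the one minimizing $\mathrm{tr}(\mathbf{S}\mathbf{G}\mathbf{W}\mathbf{G}^\top\mathbf{S}^\top)$ subject to $\mathbf{G}\mathbf{K}\mathbf{S}=\mathbf{I}_{n_b}$, is $$\widetilde{\mathbf{y}}^c=\mathbf{S}\mathbf{G}\widehat{\mathbf{y}},\qquad \mathbf{G}=(\mathbf{S}^\top\mathbf{W}_c^{-1}\mathbf{S})^{-1}\mathbf{S}^\top\mathbf{K}^\top\mathbf{W}^{-1}.$$
   Context: Structural representation of a linearly constrained multiple time series: $\mathbf{y}=[\mathbf{u}^\top\;\mathbf{b}^\top]^\top$ with upper (constrained) variables $\mathbf{u}=\mathbf{A}\mathbf{b}\in\mathbb{R}^{n_u}$ and free bottom variables $\mathbf{b}\in\mathbb{R}^{n_b}$, so that $\mathbf{y}=\mathbf{S}\mathbf{b}$. Expert $j$ provides forecasts $\widehat{\mathbf{y}}^j$ of $\mathbf{L}_j\mathbf{y}$, stacked into $\widehat{\mathbf{y}}=[\widehat{\mathbf{y}}^{1\top}\cdots\widehat{\mathbf{y}}^{p\top}]^\top$. *)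

From HB Require Import structures.
From mathcomp Require Import all_boot all_order all_algebra.
Set Implicit Arguments. Unset Strict Implicit. Unset Printing Implicit Defensive.
Import Order.TTheory GRing.Theory Num.Theory.
Local Open Scope ring_scope.

Definition selection_mx (R : ringType) (k n : nat) (L : 'M[R]_(k, n)) : Prop :=
  exists f : 'I_k -> 'I_n, injective f /\ L = \matrix_(i < k, c < n) ((f i == c)%:R).

Definition selects (R : ringType) (k n : nat) (L : 'M[R]_(k, n)) (c : 'I_n) : Prop :=
  exists i : 'I_k, L i c = 1.

Definition posdef (R : numDomainType) (m : nat) (W : 'M[R]_m) : Prop :=
  W^T = W /\ forall x : 'cV[R]_m, x != 0 -> 0 < (x^T *m W *m x) ord0 ord0.

Definition struct_mx (R : ringType) (nu nb : nat) (A : 'M[R]_(nu, nb)) : 'M[R]_(nu + nb, nb) :=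
  col_mx A 1%:M.

From HB Require Import structures.
From mathcomp Require Import all_boot all_order all_algebra.
Import Order.TTheory GRing.Theory Num.Theory.
Local Open Scope ring_scope.

(* This is the Gauss-Markov theorem for the design matrix B = K S. Since every
   variable is selected by some expert, K has full column rank, and so does S,
   hence B does. Any G with G B = I differs from the GLS estimator
   G0 = (B^T W^-1 B)^-1 B^T W^-1 by some D with D B = 0, and then G0 W D^T = 0.
   The error covariance of S G therefore splits as the one of S G0 plus
   (S D) W (S D)^T, whose trace is nonnegative and vanishes only when S D = 0,
   i.e. when D = 0. *)

Lemma row_full_ker {R : fieldType} {m n} (A : 'M[R]_(m, n)) :
  (forall x : 'cV_n, A *m x = 0 -> x = 0) -> row_full A.
Proof.
move=> A_ker; rewrite -cokermx_eq0; apply/eqP/matrixP => i c.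
have := A_ker (col c (cokermx A)); rewrite colE mulmxA mulmx_coker mul0mx.
by move/(_ erefl); rewrite -colE => /matrixP/(_ i ord0); rewrite !mxE.
Qed.

Lemma row_full_mul {R : fieldType} {m n p} (A : 'M[R]_(m, n)) (B : 'M[R]_(n, p)) :
  row_full A -> row_full B -> row_full (A *m B).
Proof.
case/row_fullP=> A' A'A /row_fullP[B' B'B]; apply/row_fullP; exists (B' *m A').
by rewrite mulmxA -(mulmxA B') A'A mulmx1 B'B.
Qed.

Lemma struct_mx_full {R : fieldType} {nu nb} (A : 'M[R]_(nu, nb)) :
  row_full (struct_mx A).
Proof.
by apply/row_fullP; exists (row_mx 0 1%:M); rewrite mul_row_col mul0mx mul1mx add0r.
Qed.

Lemma mul_selection_mx {R : pzRingType} {k n} (f : 'I_k -> 'I_n) (x : 'cV[R]_n) i :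
  (\matrix_(i < k, c < n) ((f i == c)%:R) *m x) i ord0 = x (f i) ord0.
Proof.
rewrite mxE (bigD1 (f i)) //= mxE eqxx mul1r big1 ?addr0 // => c /negbTE fic.
by rewrite mxE eq_sym fic mul0r.
Qed.

Lemma selection_mxcol_full {R : fieldType} {p n} {nj : 'I_p -> nat}
    {L : forall j : 'I_p, 'M[R]_(nj j, n)} :
  (forall j, selection_mx (L j)) -> (forall c, exists j, selects (L j) c) ->
  row_full (\mxcol_j L j).
Proof.
move=> L_sel L_cover; apply: row_full_ker => x Kx0.
apply/matrixP => c z; rewrite (ord1 z) [RHS]mxE.
have [j [i Lic]] := L_cover c; have [f [_ Lf]] := L_sel j.
have fic : f i = c.
  by apply/eqP; apply: contra_eqT Lic; rewrite Lf mxE => /negbTE->; rewrite eq_sym oner_eq0.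
have Lx0 : L j *m x = 0 by rewrite -(mxcolK L j) submxcol_mul Kx0 submxcol0.
by rewrite -fic -(mul_selection_mx f) -Lf Lx0 mxE.
Qed.

Section PositiveDefinite.

Context {R : numFieldType} {n : nat} {P : 'M[R]_n}.
Hypothesis P_pd : posdef P.

Lemma posdef_quad_ge0 (x : 'cV_n) : 0 <= (x^T *m P *m x) ord0 ord0.
Proof.
have [->|x0] := eqVneq x 0; first by rewrite mulmx0 mxE.
exact/ltW/P_pd.2.
Qed.

Lemma posdef_unitmx : P \in unitmx.
Proof.
rewrite unitmxE unitfE; apply/negP => /det0P[v v0 vP].
by have := P_pd.2 v^T; rewrite trmxK vP mul0mx mxE ltxx trmx_eq0 => /(_ v0).
Qed.

Lemma posdef_invmx : posdef (invmx P).
Proof.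
split; first by rewrite trmx_inv P_pd.1.
move=> y y0; pose z := invmx P *m y.
have yE : y = P *m z by rewrite /z mulmxA mulmxV ?mul1mx ?posdef_unitmx.
have z0 : z != 0 by apply: contraNneq y0 => z0; rewrite yE z0 mulmx0.
have -> : y^T *m invmx P *m y = (P *m z)^T *m z by rewrite -yE -mulmxA.
by rewrite trmx_mul P_pd.1; apply: P_pd.2.
Qed.

Lemma posdef_congr k (B : 'M[R]_(n, k)) : row_full B -> posdef (B^T *m P *m B).
Proof.
move=> B_full; split; first by rewrite !trmx_mul trmxK P_pd.1 mulmxA.
move=> x x0; have Bx0 : B *m x != 0.
  by apply: contraNneq x0 => Bx0; apply/eqP/(row_full_inj B_full); rewrite Bx0 mulmx0.
by have := P_pd.2 _ Bx0; rewrite trmx_mul !mulmxA.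
Qed.

Lemma mxtrace_quadE k (X : 'M[R]_(k, n)) :
  \tr (X *m P *m X^T) = \sum_i ((row i X)^T^T *m P *m (row i X)^T) ord0 ord0.
Proof.
apply: eq_bigr => i _; rewrite trmxK -row_mul !mxE.
by apply: eq_bigr => l _; rewrite !mxE.
Qed.

Lemma mxtrace_quad_ge0 k (X : 'M[R]_(k, n)) : 0 <= \tr (X *m P *m X^T).
Proof. by rewrite mxtrace_quadE; apply: sumr_ge0 => i _; apply: posdef_quad_ge0. Qed.

Lemma mxtrace_quad_eq0 k (X : 'M[R]_(k, n)) : \tr (X *m P *m X^T) = 0 -> X = 0.
Proof.
rewrite mxtrace_quadE => /(psumr_eq0P (fun i _ => posdef_quad_ge0 _)) X0.
apply/row_matrixP => i; rewrite row0; apply/eqP; apply: contra_eqT (X0 i isT).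
by rewrite -trmx_eq0 => /P_pd.2/lt0r_neq0.
Qed.

End PositiveDefinite.

Section GeneralizedLeastSquares.

Context {R : numFieldType} {m k : nat} (W : 'M[R]_m) (B : 'M[R]_(m, k)).
Hypotheses (W_pd : posdef W) (B_full : row_full B).

Definition gls_mx : 'M[R]_(k, m) := invmx (B^T *m invmx W *m B) *m B^T *m invmx W.

Let BWB_unit : B^T *m invmx W *m B \in unitmx.
Proof. exact/posdef_unitmx/posdef_congr/B_full/posdef_invmx. Qed.

Lemma gls_mx_unbiased : gls_mx *m B = 1%:M.
Proof.
have -> : gls_mx *m B = invmx (B^T *m invmx W *m B) *m (B^T *m invmx W *m B).
  by rewrite /gls_mx !mulmxA.
exact: mulVmx.
Qed.

Lemma gls_mx_orthogonal (D : 'M[R]_(k, m)) : D *m B = 0 -> gls_mx *m W *m D^T = 0.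
Proof.
move=> DB0; rewrite /gls_mx -!mulmxA mulKmx ?posdef_unitmx //.
by rewrite -trmx_mul DB0 trmx0 !mulmx0.
Qed.

Lemma gls_cov_split {n} (T : 'M[R]_(n, k)) (G : 'M[R]_(k, m)) : G *m B = 1%:M ->
  T *m G *m W *m (T *m G)^T = T *m gls_mx *m W *m (T *m gls_mx)^T
    + T *m (G - gls_mx) *m W *m (T *m (G - gls_mx))^T.
Proof.
move=> GB; set D := G - gls_mx; have GE : G = gls_mx + D by rewrite /D addrC subrK.
have DB0 : D *m B = 0 by rewrite mulmxBl GB gls_mx_unbiased subrr.
clearbody D.
have cross_GD : T *m gls_mx *m W *m (T *m D)^T = 0.
  have -> : T *m gls_mx *m W *m (T *m D)^T = T *m (gls_mx *m W *m D^T) *m T^T.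
    by rewrite trmx_mul !mulmxA.
  by rewrite gls_mx_orthogonal // mulmx0 mul0mx.
have cross_DG : T *m D *m W *m (T *m gls_mx)^T = 0.
  have -> : T *m D *m W *m (T *m gls_mx)^T = (T *m gls_mx *m W *m (T *m D)^T)^T.
    by rewrite !trmx_mul !trmxK W_pd.1 !mulmxA.
  by rewrite cross_GD trmx0.
by rewrite GE mulmxDr linearD /= !(mulmxDl, mulmxDr) cross_GD cross_DG addr0 add0r.
Qed.

Lemma gls_mx_tr_min {n} (T : 'M[R]_(n, k)) (G : 'M[R]_(k, m)) : G *m B = 1%:M ->
  \tr (T *m gls_mx *m W *m (T *m gls_mx)^T) <= \tr (T *m G *m W *m (T *m G)^T).
Proof.
move=> GB; rewrite (gls_cov_split T G GB) mxtraceD lerDl.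
exact: mxtrace_quad_ge0.
Qed.

Lemma gls_mx_tr_unique {n} (T : 'M[R]_(n, k)) (G : 'M[R]_(k, m)) :
  row_full T -> G *m B = 1%:M ->
  \tr (T *m G *m W *m (T *m G)^T) = \tr (T *m gls_mx *m W *m (T *m gls_mx)^T) ->
  G = gls_mx.
Proof.
move=> T_full GB; rewrite (gls_cov_split T G GB) mxtraceD -[RHS]addr0.
move=> /addrI/(mxtrace_quad_eq0 W_pd) TD0.
by apply/subr0_eq/(row_full_inj T_full); rewrite TD0 mulmx0.
Qed.

End GeneralizedLeastSquares.

Theorem theorem2 (R : realFieldType) (nu nb p : nat) (A : 'M[R]_(nu, nb))
  (nj : 'I_p -> nat) (L : forall j : 'I_p, 'M[R]_(nj j, nu + nb))
  (W : 'M[R]_(\sum_(j < p) nj j)) :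
  (0 < nb)%N -> (2 <= p)%N ->
  (forall j, selection_mx (L j)) ->
  (forall c : 'I_(nu + nb), exists j, selects (L j) c) ->
  posdef W ->
  let S := struct_mx A in
  let K := \mxcol_(j < p) L j in
  let Wc := invmx (K^T *m invmx W *m K) in
  let G0 := invmx (S^T *m invmx Wc *m S) *m S^T *m K^T *m invmx W in
  G0 *m K *m S = 1%:M /\
  forall G : 'M[R]_(nb, \sum_(j < p) nj j), G *m K *m S = 1%:M ->
    \tr (S *m G0 *m W *m G0^T *m S^T) <= \tr (S *m G *m W *m G^T *m S^T) /\
    (\tr (S *m G *m W *m G^T *m S^T) = \tr (S *m G0 *m W *m G0^T *m S^T) -> G = G0).
Proof.
move=> _ _ L_sel L_cover W_pd S K Wc G0.
have S_full : row_full S := struct_mx_full A.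
have KS_full : row_full (K *m S).
  exact: row_full_mul (selection_mxcol_full L_sel L_cover) S_full.
(* [invmxK] holds unconditionally, so no invertibility of Wc is needed here. *)
have G0E : G0 = gls_mx W (K *m S) by rewrite /G0 /Wc invmxK /gls_mx !trmx_mul !mulmxA.
have covE G : S *m G *m W *m G^T *m S^T = S *m G *m W *m (S *m G)^T.
  by rewrite trmx_mul !mulmxA.
rewrite G0E !covE; split; first by rewrite -mulmxA gls_mx_unbiased.
move=> G; rewrite -mulmxA covE => GKS; split.
  exact: gls_mx_tr_min.
exact: gls_mx_tr_unique.
Qed.
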